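(* Let $\nu\in\{1,2\}$ and $\rho\in\{1,2\}$ with $\rho\neq\nu$. Let $q\equiv 7\pmod 8$ and $r\equiv s\equiv 3\pmod 8$ be three distinct primes such that $\left(\frac{q}{s}\right)=\left(\frac{q}{r}\right)=(-1)^{\delta_{\nu,2}}$ and $\left(\frac{s}{r}\right)=1$. 1) Let $a,b$ be the integers with $\varepsilon_{\nu qrs}=a+b\sqrt{\nu qrs}$. Then exactly one of the three integers $2^{\delta_{\nu,1}}r(a+(-1)^{\delta_{\nu,1}})$, $2^{\delta_{\nu,2}}q(a-1)$, $2^{\delta_{\nu,2}}s(a+(-1)^{\delta_{\nu,1}})$ is a square in $\mathbb{N}$. Furthermore, for some integers $b_1,b_2$: (a) if $2^{\delta_{\nu,1}}r(a+(-1)^{\delta_{\nu,1}})$ is a square, then $\sqrt{\nu\varepsilon_{\nu qrs}}=b_1\sqrt r+b_2\sqrt{\nu qs}$ and $2^{\delta_{\nu,2}}=(-1)^{\delta_{\nu,1}}rb_1^2+(-1)^{\delta_{\nu,2}}\nu qsb_2^2$; (b) if $2^{\delta_{\nu,2}}q(a-1)$ is a square, then $\sqrt{2\varepsilon_{\nu qrs}}=b_1\sqrt{\nu q}+b_2\sqrt{rs}$ and $2=-2^{\delta_{\nu,2}}qb_1^2+rsb_2^2$; (c) if $2^{\delta_{\nu,2}}s(a+(-1)^{\delta_{\nu,1}})$ is a square, then $\sqrt{2\varepsilon_{\nu qrs}}=b_1\sqrt{\nu s}+b_2\sqrt{qr}$ and $2=(-1)^{\delta_{\nu,1}}2^{\delta_{\nu,2}}sb_1^2+(-1)^{\delta_{\nu,2}}qrb_2^2$.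 2) Let $x,y$ be the integers with $\varepsilon_{\rho qrs}=x+y\sqrt{\rho qrs}$. Then $2^{\delta_{\nu,2}}q(x-1)$ is a square in $\mathbb{N}$, and there are integers $y_1,y_2$ with $\sqrt{\rho\varepsilon_{\rho qrs}}=y_1\sqrt q+y_2\sqrt{\rho rs}$ and $\rho=-qy_1^2+\rho rsy_2^2$.
   Context: For a square-free integer $m>1$, $\varepsilon_m$ denotes the fundamental unit ($>1$) of $\mathbb{Q}(\sqrt m)$. $\delta_{i,j}$ is the Kronecker delta. $\left(\frac{\cdot}{\cdot}\right)$ is the Legendre symbol. *)

From Stdlib Require Import ZArith Znumtheory Reals List.
Open Scope Z_scope.

Definition delta (i j : Z) : Z := if Z.eqb i j then 1 else 0.

Definition legendre (a p : Z) : Z :=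
  if Z.eqb (a mod p) 0 then 0
  else if existsb (fun x : nat => Z.eqb ((Z.of_nat x * Z.of_nat x) mod p) (a mod p))
                  (seq 0 (Z.to_nat p))
       then 1 else -1.

(* z is a square in N (i.e. z = n^2 for some integer n; then z >= 0). *)
Definition is_square_N (z : Z) : Prop := exists n : Z, z = n * n.

Definition exactly_one (P Q S : Prop) : Prop :=
  (P /\ ~ Q /\ ~ S) \/ (~ P /\ Q /\ ~ S) \/ (~ P /\ ~ Q /\ S).

(* Units of the ring of integers of Q(sqrt m) (m square-free, m > 1),
   as real numbers: every element of O_K is (c + d sqrt m)/2 with c,d in Z,
   and it is a unit iff its norm (c^2 - m d^2)/4 is +-1. *)
Definition unit_OK (m : Z) (u : R) : Prop :=
  exists c d : Z,
    u = ((IZR c + IZR d * sqrt (IZR m)) / 2)%R /\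
    (c * c - m * d * d = 4 \/ c * c - m * d * d = -4).

Definition fund_unit (m : Z) (eps : R) : Prop :=
  unit_OK m eps /\ (1 < eps)%R /\
  forall u : R, unit_OK m u -> (1 < u)%R -> (eps <= u)%R.

From Stdlib Require Import ZArith Znumtheory Reals.
From Stdlib Require Import Lia Lra List.
Open Scope Z_scope.

(* Write the fundamental unit as [a + b sqrt m], [m = nu q r s] or [rho q r s].
   Its norm is [1] (norm [-1] is impossible mod 8), so [(a - 1)(a + 1) = m b^2]
   and the coprime factors (halved when [a] is odd) are [d u^2] and [d' v^2]
   with [d d' = m], whence [d' v^2 - d u^2] is [1] or [2].  Every way of
   splitting [m = d d'] but the announced ones is refuted modulo 8, or modulo
   one of [q], [r], [s] using the Legendre symbols (which quadratic
   reciprocity, via Gauss's lemma and Eisenstein's lattice-point count,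
   determines from the hypotheses), or, when [d = m], because the unit would
   be a square.  In the surviving cases [sqrt (k eps) = u sqrt d + v sqrt d']
   up to factors 2. *)

Module QuadraticResidues.
From mathcomp Require Import all_boot all_algebra finfield ssrZ zify.
Import GRing.Theory.
Local Open Scope ring_scope.

Section EulerCriterion.
Variable p : nat.
Hypotheses (p_prime : prime p) (p_odd : odd p).
Local Notation F := 'F_p.
Local Notation P := p./2.

Lemma prime_half_double : p = (P + P).+1.
Proof. by have := odd_double_half p; rewrite p_odd -addnn; lia. Qed.

Lemma half_prime_gt0 : (0 < P)%N.
Proof. by have := prime_gt1 p_prime; have := prime_half_double; lia. Qed.

Lemma Fp_expr_half_double (x : F) : x != 0 -> x ^+ (P + P) = 1.
Proof.
move=> x0; have := expf_card x; rewrite card_Fp //.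
have -> : x ^+ p = x ^+ (P + P).+1 by rewrite -prime_half_double.
by rewrite exprS => h; apply: (mulfI x0); rewrite h mulr1.
Qed.

Lemma Fp_expr_half_sign (x : F) : x != 0 -> x ^+ P = 1 \/ x ^+ P = -1.
Proof.
move=> x0; have : (x ^+ P) ^+ 2 == 1.
  by rewrite -exprM muln2 -addnn Fp_expr_half_double.
by rewrite sqrf_eq1 => /orP [/eqP ->|/eqP ->]; [left|right].
Qed.

Lemma Fp_nat_inj (i j : nat) : (i < p)%N -> (j < p)%N -> (i%:R == j%:R :> F) = (i == j).
Proof.
move=> ip jp; apply/eqP/eqP => [h|-> //].
by move/(congr1 val): h; rewrite /= !val_Fp_nat // !modn_small.
Qed.

Lemma Fp_nat_neq0 (i : nat) : (0 < i < p)%N -> i%:R != 0 :> F.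
Proof.
case/andP=> i0 ip; rewrite -(dvdn_pcharf (pchar_Fp p_prime)).
by apply/negP=> /(dvdn_leq i0); lia.
Qed.

Lemma Fp_one_neq_opp1 : (1 : F) != -1.
Proof.
rewrite -subr_eq0 opprK -(natrD _ 1 1) Fp_nat_neq0 //.
by have := prime_gt1 p_prime; have := prime_half_double; lia.
Qed.

(* Otherwise [x] and the squares [k^2], [1 <= k <= P], would be [P + 1]
   distinct roots of [X^P - 1]. *)
Lemma Fp_square_of_expr_half (x : F) : x != 0 -> x ^+ P = 1 -> exists y, y ^+ 2 = x.
Proof.
move=> x0 xP; have [y /eqP hy|nsq] := pickP (fun y : F => y ^+ 2 == x); first by exists y.
pose rs := x :: [seq (k%:R : F) ^+ 2 | k <- iota 1 P].
have pE := prime_half_double.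
suff : (size rs <= P)%N by rewrite /= size_map size_iota ltnn.
apply: (max_unity_roots half_prime_gt0).
- rewrite /= unity_rootE xP eqxx /=; apply/allP => z /mapP [k kin ->].
  rewrite unity_rootE -exprM mul2n -addnn Fp_expr_half_double // Fp_nat_neq0 //.
  by move: kin; rewrite mem_iota; lia.
- rewrite /= map_inj_in_uniq ?iota_uniq ?andbT.
  + by apply/mapP => [[k _ h]]; have := nsq k%:R; rewrite /= -h eqxx.
  + move=> i j; rewrite !mem_iota => hi hj /eqP; rewrite eqf_sqr => /orP [|].
    * by rewrite Fp_nat_inj; [move/eqP| lia | lia].
    * by rewrite -addr_eq0 -natrD (negbTE (Fp_nat_neq0 _ _)) //; lia.
Qed.

End EulerCriterion.

Section GaussLemma.
Variables p a : nat.
Hypotheses (p_prime : prime p) (p_odd : odd p) (p_ndvd_a : ~~ (p %| a)%N).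
Local Notation F := 'F_p.
Local Notation P := p./2.

Definition mul_res k := (k * a %% p)%N.
Definition mul_res_big k := (P < mul_res k)%N.
Definition abs_mul_res k := if mul_res_big k then (p - mul_res k)%N else mul_res k.
Definition gauss_count := (\sum_(k <- iota 1 P) (mul_res_big k : nat))%N.

Lemma mul_res_lt k : (mul_res k < p)%N.
Proof. by rewrite ltn_pmod // prime_gt0. Qed.

Lemma Fp_a_neq0 : a%:R != 0 :> F.
Proof. by rewrite -(dvdn_pcharf (pchar_Fp p_prime)). Qed.

Lemma Fp_mul_abs_res k :
  (k * a)%:R = (if mul_res_big k then - (abs_mul_res k)%:R else (abs_mul_res k)%:R) :> F.
Proof.
rewrite /abs_mul_res -(Fp_nat_mod p_prime) -/(mul_res k); case: (mul_res_big k) => //.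
by rewrite natrB ?(ltnW (mul_res_lt k)) // pchar_Fp_0 // sub0r opprK.
Qed.

Lemma mem_half_range k : k \in iota 1 P -> (0 < k < p)%N.
Proof. by rewrite mem_iota; have := prime_half_double _ p_prime p_odd; lia. Qed.

Lemma abs_mul_res_inj : {in iota 1 P &, injective abs_mul_res}.
Proof.
move=> i j hi hj eij; have := Fp_mul_abs_res i; have := Fp_mul_abs_res j.
rewrite eij; set m := (abs_mul_res j)%:R => ej ei.
have pE := prime_half_double _ p_prime p_odd.
have ij0 : (i + j)%:R != 0 :> F.
  by apply: Fp_nat_neq0 => //; move: hi hj; rewrite !mem_iota; lia.
have : ((i * a)%:R == (j * a)%:R :> F) || ((i * a)%:R + (j * a)%:R == 0 :> F).
  by rewrite ei ej; case: (mul_res_big i); case: (mul_res_big j);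
    rewrite ?addNr ?addrN eqxx ?orbT.
rewrite -natrD -mulnDl !natrM (inj_eq (mulIf Fp_a_neq0)) mulf_eq0.
rewrite (negbTE Fp_a_neq0) (negbTE ij0) /= orbF Fp_nat_inj // => [/eqP //||].
- by move: hi; rewrite mem_iota; lia.
- by move: hj; rewrite mem_iota; lia.
Qed.

Lemma abs_mul_res_mem k : k \in iota 1 P -> abs_mul_res k \in iota 1 P.
Proof.
move=> hk; have /andP [k0 kp] := mem_half_range _ hk.
have r0 : (0 < mul_res k)%N.
  rewrite lt0n /mul_res -/(dvdn p (k * a)) Euclid_dvdM // negb_or p_ndvd_a andbT.
  by apply/negP => /(dvdn_leq k0); lia.
have := mul_res_lt k; rewrite mem_iota /abs_mul_res /mul_res_big.
by have := prime_half_double _ p_prime p_odd; case: ifP; lia.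
Qed.

Lemma perm_abs_mul_res : perm_eq [seq abs_mul_res k | k <- iota 1 P] (iota 1 P).
Proof.
have uniq_img : uniq [seq abs_mul_res k | k <- iota 1 P].
  by rewrite map_inj_in_uniq ?iota_uniq //; apply: abs_mul_res_inj.
apply: uniq_perm; rewrite ?iota_uniq //.
have [] := uniq_min_size uniq_img (s2 := iota 1 P) _ _ => //; last by rewrite size_map.
by move=> x /mapP [k hk ->]; apply: abs_mul_res_mem.
Qed.

(* Gauss's lemma: compare [\prod_k (k * a)] with [\prod_k k], [1 <= k <= P],
   through the permutation [abs_mul_res]. *)
Lemma Fp_expr_half_gauss : a%:R ^+ P = (-1) ^+ gauss_count :> F.
Proof.
have e1 : \prod_(k <- iota 1 P) ((k * a)%:R : F)
          = (\prod_(k <- iota 1 P) (k%:R : F)) * a%:R ^+ P.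
  rewrite -[in X in _ = _ * X](size_iota 1 P) -sum1_size -prodrXr -big_split /=.
  by apply: eq_bigr => k _; rewrite natrM expr1.
have e2 : \prod_(k <- iota 1 P) ((k * a)%:R : F)
          = (-1) ^+ gauss_count * \prod_(k <- iota 1 P) (k%:R : F).
  rewrite /gauss_count -prodrXr -[X in _ = _ * X](perm_big _ perm_abs_mul_res).
  rewrite big_map -big_split /=; apply: eq_bigr => k _; rewrite Fp_mul_abs_res.
  by case: (mul_res_big k); rewrite /= ?mulN1r ?mul1r ?expr1 ?expr0.
have nz : \prod_(k <- iota 1 P) (k%:R : F) != 0.
  rewrite prodf_seq_neq0; apply/allP => k hk /=.
  by apply: Fp_nat_neq0 => //; apply: mem_half_range.
by apply: (mulfI nz); rewrite -e1 e2 mulrC.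
Qed.

(* Eisenstein: sum [k a = (k a %/ p) p + mul_res k] over the half range and
   reduce mod 2, using that [abs_mul_res] permutes the half range. *)
Lemma odd_gauss_count : odd a -> odd gauss_count = odd (\sum_(k <- iota 1 P) (k * a %/ p))%N.
Proof.
move=> a_odd.
have hk k : (k * a + 2 * (mul_res_big k * abs_mul_res k)
             = (k * a %/ p) * p + abs_mul_res k + mul_res_big k * p)%N.
  have := divn_eq (k * a) p; have := mul_res_lt k.
  by rewrite /abs_mul_res -/(mul_res k); case: (mul_res_big k) => /=; lia.
have sum_hk s : ((\sum_(k <- s) k) * a
                 + 2 * (\sum_(k <- s) mul_res_big k * abs_mul_res k)
    = (\sum_(k <- s) (k * a %/ p)) * p + \sum_(k <- s) abs_mul_res k
      + (\sum_(k <- s) (mul_res_big k : nat)) * p)%N.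
  by elim: s => [|k s IH]; rewrite ?big_nil // !big_cons; have := hk k; nia.
have := sum_hk (iota 1 P).
rewrite -[X in (X * a)%N](perm_big _ perm_abs_mul_res) big_map -/gauss_count.
set S := (\sum_(k <- _) abs_mul_res k)%N.
set X := (\sum_(k <- _) (mul_res_big k * abs_mul_res k))%N.
set Fl := (\sum_(k <- _) (k * a %/ p))%N => e.
have [a' ea] : exists a', a = a'.*2.+1.
  by exists a./2; have := odd_double_half a; rewrite a_odd; lia.
have [p' ep] : exists p', p = p'.*2.+1.
  by exists p./2; have := odd_double_half p; rewrite p_odd; lia.
by rewrite ea ep in e; nia.
Qed.

End GaussLemma.

Lemma signr_eq1 (F : fieldType) (n : nat) : (1 : F) != -1 -> ((-1 : F) ^+ n == 1) = ~~ odd n.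
Proof.
move=> h; rewrite -signr_odd; case: (odd n); rewrite /= ?expr1 ?expr0 ?eqxx //.
by apply/negbTE; rewrite eq_sym.
Qed.

Lemma Fp_expr_half_eq1 p a : prime p -> odd p -> ~~ (p %| a)%N -> odd a ->
  ((a%:R : 'F_p) ^+ p./2 == 1) = ~~ odd (\sum_(k <- iota 1 p./2) (k * a %/ p))%N.
Proof.
move=> pp po pa ao.
by rewrite Fp_expr_half_gauss // signr_eq1 ?Fp_one_neq_opp1 // odd_gauss_count.
Qed.

Lemma sum_iota_leq (n m : nat) : (\sum_(y <- iota 1 m) (y <= n : nat) = minn n m)%N.
Proof.
elim: m => [|m IH]; first by rewrite big_nil; lia.
by rewrite -[m.+1]addn1 iotaD big_cat /= IH big_cons big_nil; lia.
Qed.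

Lemma sum_iota_gtn (h n : nat) : (\sum_(k <- iota 1 n) (h < k : nat) = n - minn n h)%N.
Proof.
elim: n => [|n IH]; first by rewrite big_nil.
by rewrite -[n.+1]addn1 iotaD big_cat /= IH big_cons big_nil; lia.
Qed.

Lemma prime_mul_neq p q x y : prime p -> prime q -> p != q -> (0 < x < p)%N ->
  (p * y != q * x)%N.
Proof.
move=> pp qp pq /andP [x0 xp]; apply/eqP => e.
have : (p %| q * x)%N by rewrite -e dvdn_mulr.
rewrite Euclid_dvdM // dvdn_prime2 // (negbTE pq) /=.
by move/(dvdn_leq x0); lia.
Qed.

Lemma floor_sum_lattice p q : prime p -> prime q -> odd p -> odd q -> p != q ->
  (\sum_(x <- iota 1 p./2) (x * q %/ p)
   = \sum_(x <- iota 1 p./2) \sum_(y <- iota 1 q./2) (p * y < q * x : nat))%N.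
Proof.
move=> pp qp po qo pq.
have ep := prime_half_double _ pp po; have eq := prime_half_double _ qp qo.
rewrite big_seq [RHS]big_seq; apply: eq_bigr => x; rewrite mem_iota => hx.
have le : (x * q %/ p <= q./2)%N by rewrite -ltnS ltn_divLR ?prime_gt0 //; nia.
rewrite -[LHS](elimT minn_idPl le) -sum_iota_leq big_seq [RHS]big_seq.
apply: eq_bigr => y; rewrite mem_iota => hy; rewrite leq_divRL ?prime_gt0 //.
have : (0 < x < p)%N by lia.
move=> /(prime_mul_neq _ _ _ y pp qp pq); rewrite mulnC (mulnC x).
by case: ltngtP.
Qed.

Lemma lattice_count p q : prime p -> prime q -> odd p -> odd q -> p != q ->
  (\sum_(x <- iota 1 p./2) (x * q %/ p) + \sum_(y <- iota 1 q./2) (y * p %/ q)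
   = p./2 * q./2)%N.
Proof.
move=> pp qp po qo pq; have qp' : q != p by rewrite eq_sym.
have ep := prime_half_double _ pp po.
rewrite (floor_sum_lattice _ _ pp qp) // (floor_sum_lattice _ _ qp pp) //.
set P := p./2; set Q := q./2.
rewrite (exchange_big _ _ (iota 1 Q)) /= -big_split /=.
rewrite mulnC -[Q in (_ = Q * _)%N](size_iota 1 Q) -sum1_size big_distrl /=.
rewrite big_seq [RHS]big_seq; apply: eq_bigr => y; rewrite mem_iota => hy.
rewrite -big_split /= -[P in (_ = _ * P)%N](size_iota 1 P) -sum1_size mul1n.
rewrite big_seq [RHS]big_seq; apply: eq_bigr => x; rewrite mem_iota => hx.
have : (0 < x < p)%N by lia.
by move=> /(prime_mul_neq _ _ _ y pp qp pq); case: ltngtP.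
Qed.

Lemma quadratic_reciprocity p q : prime p -> prime q -> odd p -> odd q -> p != q ->
  ((q%:R : 'F_p) ^+ p./2 == 1) = ((p%:R : 'F_q) ^+ q./2 == 1) (+) odd (p./2 * q./2).
Proof.
move=> pp qp po qo pq; have qp' : q != p by rewrite eq_sym.
rewrite !Fp_expr_half_eq1 ?dvdn_prime2 // -(lattice_count _ _ pp qp po qo pq) oddD.
by case: (odd _); case: (odd _).
Qed.

Lemma gauss_count_two p : prime p -> odd p -> gauss_count p 2 = (p./2 - p./2./2)%N.
Proof.
move=> pp po; have pE := prime_half_double _ pp po.
rewrite /gauss_count (_ : (p./2 - p./2./2 = p./2 - minn p./2 p./2./2)%N); last first.
  by have := odd_double_half p./2; lia.
rewrite -sum_iota_gtn big_seq [RHS]big_seq; apply: eq_bigr => k; rewrite mem_iota => hk.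
rewrite /mul_res_big /mul_res modn_small; last by lia.
by have := odd_double_half p./2; lia.
Qed.

Lemma Fp_two_expr_half p : prime p -> odd p ->
  (2%:R : 'F_p) ^+ p./2 = (-1) ^+ (p./2 - p./2./2).
Proof.
move=> pp po; rewrite Fp_expr_half_gauss ?gauss_count_two // dvdn_prime2 //.
by apply: contraTN po => /eqP ->.
Qed.

Local Open Scope Z_scope.

Definition Fp_of_Z (p : nat) (z : Z) : 'F_p := (int_of_Z z)%:~R.

Lemma Fp_of_ZM p x y : Fp_of_Z p (x * y) = (Fp_of_Z p x * Fp_of_Z p y)%R.
Proof. by rewrite /Fp_of_Z -intrM; congr (_%:~R); lia. Qed.

Lemma Fp_of_ZB p x y : Fp_of_Z p (x - y) = (Fp_of_Z p x - Fp_of_Z p y)%R.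
Proof. by rewrite /Fp_of_Z -intrB; congr (_%:~R); lia. Qed.

Lemma Fp_of_ZN p x : Fp_of_Z p (- x) = (- Fp_of_Z p x)%R.
Proof. by rewrite /Fp_of_Z -intrN; congr (_%:~R); lia. Qed.

Lemma Fp_of_Z_nat p (n : nat) : Fp_of_Z p (Z.of_nat n) = n%:R.
Proof. by rewrite /Fp_of_Z (_ : int_of_Z (Z.of_nat n) = n%:Z) //; lia. Qed.

Lemma Fp_of_Z_eq0 p x : prime p -> (Fp_of_Z p x = 0)%R <-> (Z.of_nat p | x).
Proof.
move=> pp; rewrite /Fp_of_Z; have := dvdz_pcharf (pchar_Fp pp) (int_of_Z x).
move=> dvd_eq0; split.
- by move/eqP; rewrite -dvd_eq0 => /dvdzP [k hk]; exists (Z_of_int k); lia.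
- by move=> [k hk]; apply/eqP; rewrite -dvd_eq0; apply/dvdzP; exists (int_of_Z k); lia.
Qed.

Lemma prime_Z_to_nat (p : Z) : Znumtheory.prime p -> prime (Z.to_nat p).
Proof.
move=> hp; have h2 := prime_ge_2 _ hp; apply/primeP; split; first lia.
move=> d /dvdnP [k hk]; have hd : (Z.of_nat d | p).
  exists (Z.of_nat k).
  have : Z.of_nat (Z.to_nat p) = Z.of_nat (k * d) by rewrite hk.
  lia.
by have := prime_divisors _ hp _ hd; lia.
Qed.

(* Euler's criterion [x^((p-1)/2) = +-1 mod p] read as an integer; it is the
   Legendre symbol when [p] does not divide [x] (junk value [-1] otherwise). *)
Definition euler_sym (p x : Z) : Z :=
  if (Fp_of_Z (Z.to_nat p) x ^+ (Z.to_nat p)./2 == 1)%R then 1 else -1.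

Section EulerSymbol.
Variable p : Z.
Hypotheses (p_prime : Znumtheory.prime p) (p_odd : p mod 2 = 1).
Let pn := Z.to_nat p.
Let pn_prime : prime pn := prime_Z_to_nat p p_prime.
Let pE : p = Z.of_nat pn.
Proof. by have := prime_ge_2 _ p_prime; rewrite /pn; lia. Qed.
Let pn_odd : odd pn.
Proof.
by have := prime_ge_2 _ p_prime; have := Z_div_mod_eq_full p 2; rewrite /pn; lia.
Qed.

Let Fp_opp1_eq1 : ((-1 : 'F_pn) == 1)%R = false.
Proof. by rewrite eq_sym (negbTE (Fp_one_neq_opp1 _ pn_prime pn_odd)). Qed.

Let Fp_of_Z_eq0_dvd x : (Fp_of_Z pn x = 0)%R <-> (p | x).
Proof. by rewrite [in X in _ <-> X]pE; apply: Fp_of_Z_eq0. Qed.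

Lemma euler_sym_pm1 x : euler_sym p x = 1 \/ euler_sym p x = -1.
Proof. by rewrite /euler_sym; case: ifP; [left|right]. Qed.

Lemma euler_sym_expr x : ~ (p | x) ->
  (Fp_of_Z pn x ^+ pn./2)%R = if euler_sym p x == 1 then 1%R else (-1)%R.
Proof.
move=> px; have nz : (Fp_of_Z pn x != 0)%R by apply/eqP => /Fp_of_Z_eq0_dvd.
rewrite /euler_sym -/pn; have [->|->] := Fp_expr_half_sign _ pn_prime pn_odd _ nz.
  by rewrite eqxx.
by rewrite Fp_opp1_eq1.
Qed.

Lemma euler_symM x y : ~ (p | x) -> ~ (p | y) ->
  euler_sym p (x * y) = euler_sym p x * euler_sym p y.
Proof.
move=> px py; have pxy : ~ (p | x * y) by move=> /(prime_mult _ p_prime) [].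
have := euler_sym_expr _ pxy; rewrite Fp_of_ZM exprMn !euler_sym_expr //.
have opp1_neq1 : ((-1 : Z) == 1) = false by [].
case: (euler_sym_pm1 x) => ->; case: (euler_sym_pm1 y) => ->;
  case: (euler_sym_pm1 (x * y)) => -> //;
  rewrite ?eqxx ?opp1_neq1 ?mul1r ?mulr1 ?mulN1r ?opprK //= => h;
  by move: (Fp_one_neq_opp1 _ pn_prime pn_odd); rewrite {1}h eqxx.
Qed.

Lemma euler_sym_sq x : ~ (p | x) -> euler_sym p (x * x) = 1.
Proof.
move=> px; have nz : (Fp_of_Z pn x != 0)%R by apply/eqP => /Fp_of_Z_eq0_dvd.
by rewrite /euler_sym -/pn Fp_of_ZM -expr2 -exprM mul2n -addnn Fp_expr_half_double // eqxx.
Qed.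

Lemma euler_sym_cong x y : (p | x - y) -> euler_sym p x = euler_sym p y.
Proof.
by move=> /Fp_of_Z_eq0_dvd /eqP; rewrite Fp_of_ZB subr_eq0 /euler_sym -/pn => /eqP ->.
Qed.

Lemma euler_sym_m1 : p mod 4 = 3 -> euler_sym p (-1) = -1.
Proof.
move=> p4; rewrite /euler_sym -/pn (_ : -1 = - Z.of_nat 1) // Fp_of_ZN Fp_of_Z_nat.
rewrite -signr_odd (_ : odd pn./2).
  by rewrite expr1 Fp_opp1_eq1.
have := odd_double_half pn; have := Z_div_mod_eq_full p 4.
by have := prime_ge_2 _ p_prime; rewrite /pn; lia.
Qed.

Lemma euler_sym_two_3mod8 : p mod 8 = 3 -> euler_sym p 2 = -1.
Proof.
move=> p8; rewrite /euler_sym -/pn (_ : 2 = Z.of_nat 2) // Fp_of_Z_nat.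
rewrite Fp_two_expr_half // -signr_odd (_ : odd _).
  by rewrite expr1 Fp_opp1_eq1.
have := odd_double_half pn; have := odd_double_half pn./2; have := odd_double_half pn./2./2.
by have := Z_div_mod_eq_full p 8; have := prime_ge_2 _ p_prime; rewrite /pn; lia.
Qed.

Lemma euler_sym_two_7mod8 : p mod 8 = 7 -> euler_sym p 2 = 1.
Proof.
move=> p8; rewrite /euler_sym -/pn (_ : 2 = Z.of_nat 2) // Fp_of_Z_nat.
rewrite Fp_two_expr_half // -signr_odd (_ : odd _ = false) ?expr0 ?eqxx //.
have := odd_double_half pn; have := odd_double_half pn./2; have := odd_double_half pn./2./2.
by have := Z_div_mod_eq_full p 8; have := prime_ge_2 _ p_prime; rewrite /pn; lia.
Qed.

Lemma legendre_euler_sym a : ~ (p | a) -> legendre a p = euler_sym p a.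
Proof.
move=> pa; have p0 : p <> 0 by have := prime_ge_2 _ p_prime; lia.
rewrite /legendre; case: Z.eqb_spec => [/(Z.mod_divide _ _ p0)/pa [] | _].
case: ifP => [/List.existsb_exists [x [_ /Z.eqb_eq hx]] | e].
  have hd : (p | Z.of_nat x * Z.of_nat x - a).
    by apply/Z.mod_divide => //; rewrite Zminus_mod hx Z.sub_diag.
  rewrite -(euler_sym_cong _ _ hd) euler_sym_sq // => px; apply: pa.
  have := Z.divide_sub_r _ _ _ (Z.divide_mul_l _ _ (Z.of_nat x) px) hd.
  by rewrite Z.sub_sub_distr Z.sub_diag Z.add_0_l.
have [h1|-> //] := euler_sym_pm1 a; exfalso.
have := euler_sym_expr a pa; rewrite h1 eqxx.
case/(Fp_square_of_expr_half _ pn_prime pn_odd) => [|y hy].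
  by apply/eqP => /Fp_of_Z_eq0_dvd.
set n := nat_of_ord y.
have nlt : (n < pn)%N.
  by have : (n < (Zp_trunc (pdiv pn)).+2)%N := ltn_ord y; rewrite Fp_cast.
have yn : y = n%:R by apply: val_inj => /=; rewrite val_Fp_nat // modn_small.
have [k hk] : (p | Z.of_nat n * Z.of_nat n - a).
  by apply/Fp_of_Z_eq0_dvd; rewrite Fp_of_ZB Fp_of_ZM Fp_of_Z_nat -yn -expr2 hy subrr.
suff : List.existsb (fun x : nat => (Z.of_nat x * Z.of_nat x) mod p =? a mod p)
         (List.seq 0 (Z.to_nat p)) = true by rewrite e.
apply/List.existsb_exists; exists n; split.
  by apply/List.in_seq; rewrite -/pn; lia.
by apply/Z.eqb_eq; rewrite (_ : _ * _ = a + k * p) ?Z_mod_plus_full //; lia.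
Qed.

End EulerSymbol.

Lemma euler_sym_reciprocity p q : Znumtheory.prime p -> Znumtheory.prime q ->
  p mod 4 = 3 -> q mod 4 = 3 -> p <> q -> euler_sym p q = - euler_sym q p.
Proof.
move=> hp hq p4 q4 pq.
have gp := prime_ge_2 _ hp; have gq := prime_ge_2 _ hq.
have e4p := Z_div_mod_eq_full p 4; have e4q := Z_div_mod_eq_full q 4.
have pn_prime := prime_Z_to_nat p hp; have qn_prime := prime_Z_to_nat q hq.
set pn := Z.to_nat p in pn_prime *; set qn := Z.to_nat q in qn_prime *.
have pE : p = Z.of_nat pn by rewrite /pn; lia.
have qE : q = Z.of_nat qn by rewrite /qn; lia.
have pn_odd : odd pn by rewrite /pn; lia.
have qn_odd : odd qn by rewrite /qn; lia.
have pq' : pn != qn by apply/eqP; rewrite /pn /qn; lia.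
have odd_PQ : odd (pn./2 * qn./2).
  rewrite oddM; have := odd_double_half pn; have := odd_double_half qn.
  by rewrite /pn /qn; lia.
rewrite /euler_sym -/pn -/qn [in Fp_of_Z pn _]qE [in Fp_of_Z qn _]pE !Fp_of_Z_nat.
by rewrite quadratic_reciprocity // odd_PQ addbT; case: (_ ^+ _ == _).
Qed.

End QuadraticResidues.
Import QuadraticResidues.

Set Bullet Behavior "Strict Subproofs".

Lemma Zgcd_square a b : Z.gcd (a * a) (b * b) = Z.gcd a b * Z.gcd a b.
Proof.
destruct (Z.eq_dec (Z.gcd a b) 0) as [h0|h0].
- apply Z.gcd_eq_0 in h0; destruct h0; subst; reflexivity.
- set (g := Z.gcd a b).
  assert (hg : 0 < g) by (pose proof (Z.gcd_nonneg a b); unfold g; lia).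
  destruct (Z.gcd_divide_l a b) as [a1 ha]; destruct (Z.gcd_divide_r a b) as [b1 hb].
  fold g in ha, hb.
  assert (h1 : Z.gcd a1 b1 = 1).
  { assert (e1 : a1 = a / g) by (rewrite ha, Z.div_mul; lia).
    assert (e2 : b1 = b / g) by (rewrite hb, Z.div_mul; lia).
    rewrite e1, e2; apply Z.gcd_div_gcd; unfold g; lia. }
  assert (h2 : Z.gcd (a1 * a1) (b1 * b1) = 1).
  { apply Zgcd_1_rel_prime; apply Zgcd_1_rel_prime in h1.
    apply rel_prime_mult; apply rel_prime_sym; apply rel_prime_mult;
      apply rel_prime_sym; assumption. }
  rewrite ha, hb.
  replace (a1 * g * (a1 * g)) with (g * g * (a1 * a1)) by ring.
  replace (b1 * g * (b1 * g)) with (g * g * (b1 * b1)) by ring.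
  rewrite Z.gcd_mul_mono_l, h2, Z.abs_eq by nia; ring.
Qed.

Lemma coprime_mul_square_l x y z :
  0 < x -> Z.gcd x y = 1 -> x * y = z * z -> exists u, 0 <= u /\ x = u * u.
Proof.
intros hx hg e; exists (Z.gcd x z); split; [apply Z.gcd_nonneg|].
rewrite <- Zgcd_square, <- e, Z.gcd_mul_mono_l, hg; lia.
Qed.

Lemma coprime_mul_eq_mul_square x y m z :
  0 < x -> 0 < y -> 0 < m -> Z.gcd x y = 1 -> x * y = m * (z * z) ->
  exists d d' u v, 0 < d /\ 0 < d' /\ d * d' = m /\ 0 <= u /\ 0 <= v /\
                   x = d * (u * u) /\ y = d' * (v * v).
Proof.
intros hx hy hm hg e.
set (d := Z.gcd x m).
assert (hd : 0 < d).
{ pose proof (Z.gcd_nonneg x m); assert (d <> 0); [|unfold d in *; lia].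
  intro h; apply Z.gcd_eq_0 in h; lia. }
destruct (Z.gcd_divide_l x m) as [x1 hx1]; destruct (Z.gcd_divide_r x m) as [k1 hk1].
fold d in hx1, hk1.
assert (hc : Z.gcd x1 k1 = 1).
{ assert (e1 : x1 = x / d) by (rewrite hx1, Z.div_mul; lia).
  assert (e2 : k1 = m / d) by (rewrite hk1, Z.div_mul; lia).
  rewrite e1, e2; apply Z.gcd_div_gcd; unfold d; lia. }
assert (e2 : x1 * y = k1 * (z * z)).
{ apply (Z.mul_cancel_l _ _ d); [lia|]; rewrite hx1, hk1 in e; nia. }
assert (hk : (k1 | y)).
{ apply (Z.gauss _ x1); [exists (z * z); rewrite e2; ring | rewrite Z.gcd_comm; assumption]. }
destruct hk as [y1 hy1].
assert (hk1p : 0 < k1) by nia.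
assert (hx1p : 0 < x1) by nia.
assert (hy1p : 0 < y1) by nia.
assert (e3 : x1 * y1 = z * z).
{ apply (Z.mul_cancel_l _ _ k1); [lia|]; rewrite hy1 in e2; nia. }
assert (hg1 : Z.gcd x1 y1 = 1).
{ apply Z.gcd_unique; [lia | apply Z.divide_1_l | apply Z.divide_1_l |].
  intros t ht1 ht2; rewrite <- hg; apply Z.gcd_greatest.
  - rewrite hx1; apply Z.divide_mul_l; assumption.
  - rewrite hy1; apply Z.divide_mul_l; assumption. }
destruct (coprime_mul_square_l x1 y1 z hx1p hg1 e3) as [u [hu eu]].
destruct (coprime_mul_square_l y1 x1 z hy1p) as [v [hv ev]];
  [rewrite Z.gcd_comm; assumption | lia |].
exists d, k1, u, v; repeat split; lia.
Qed.

Lemma square_divide t n : (t * t | n * n) -> (t | n).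
Proof.
intros h.
assert (e : Z.gcd (t * t) (n * n) = Z.abs t * Z.abs t).
{ replace (Z.abs t * Z.abs t) with (t * t) by nia.
  apply Z.gcd_unique; [nia | apply Z.divide_refl | assumption | auto]. }
rewrite Zgcd_square in e.
assert (Z.gcd t n = Z.abs t) by (pose proof (Z.gcd_nonneg t n); nia).
apply Z.divide_abs_l; rewrite <- H; apply Z.gcd_divide_r.
Qed.

Lemma not_square_mul_square K t n p :
  prime p -> t <> 0 -> (p | K) -> ~ (p * p | K) -> K * (t * t) <> n * n.
Proof.
intros hp ht hpK hpp e.
assert (htn : (t * t | n * n)) by (exists K; lia).
apply square_divide in htn; destruct htn as [w hw]; subst n.
assert (eK : K = w * w) by (apply (Z.mul_cancel_l _ _ (t * t)); nia).
subst K; apply hpp.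
destruct (prime_mult p hp w w hpK) as [[k hk]|[k hk]]; exists (k * k); subst; ring.
Qed.

Lemma prime_sq_not_divide_mul p K : prime p -> ~ (p | K) -> ~ (p * p | p * K).
Proof.
intros hp hK h; pose proof (prime_ge_2 p hp).
apply hK, (Z.mul_divide_cancel_l _ _ p); [lia | assumption].
Qed.

Lemma not_square_prime_mul p K t X :
  prime p -> ~ (p | K) -> t <> 0 -> X = p * K * (t * t) -> ~ is_square_N X.
Proof.
intros hp hK ht -> [n hn].
apply (not_square_mul_square (p * K) t n p hp ht (Z.divide_factor_l p K)); [|exact hn].
apply prime_sq_not_divide_mul; assumption.
Qed.

(* For odd [a], [(a - 1)/2] and [(a + 1)/2] are coprime with product
   [m (b/2)^2]; for even [a], [a - 1] and [a + 1] are coprime with product [m b^2]. *)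
Lemma pell_factor a b m :
  0 < m -> m mod 4 <> 0 -> 1 < a -> 0 < b -> a * a - m * (b * b) = 1 ->
  exists d d' u v, 0 < d /\ 0 < d' /\ d * d' = m /\ 0 < u /\ 0 < v /\
   ((a - 1 = 2 * d * (u * u) /\ a + 1 = 2 * d' * (v * v) /\ b = 2 * u * v) \/
    (a - 1 = d * (u * u) /\ a + 1 = d' * (v * v) /\ b = u * v /\ a mod 2 = 0)).
Proof.
intros hm hm4 ha hb e.
pose proof (Z_div_mod_eq_full a 2) as ea; pose proof (Z.mod_pos_bound a 2 ltac:(lia)) as ba.
set (t := a / 2) in *.
destruct (Z.eq_dec (a mod 2) 1) as [ao|ae].
- pose proof (Z_div_mod_eq_full b 2) as eb; pose proof (Z.mod_pos_bound b 2 ltac:(lia)) as bb.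
  set (w := b / 2) in *.
  assert (be : b mod 2 = 0).
  { destruct (Z.eq_dec (b mod 2) 1) as [bo|]; [|lia].
    exfalso; apply hm4.
    assert (e4 : m = (t * t + t - m * (w * w + w)) * 4) by nia.
    rewrite e4; apply Z_mod_mult. }
  assert (ex : t * (t + 1) = m * (w * w)) by nia.
  assert (hg : Z.gcd t (t + 1) = 1).
  { replace (t + 1) with (1 + 1 * t) by ring; rewrite Z.gcd_add_mult_diag_r; apply Z.gcd_1_r. }
  destruct (coprime_mul_eq_mul_square t (t + 1) m w ltac:(lia) ltac:(lia) hm hg ex)
    as (d & d' & u & v & hd & hd' & edd & hu & hv & eu & ev).
  assert (hw : w * w = (u * v) * (u * v)).
  { apply (Z.mul_cancel_l _ _ m); [lia|]; rewrite <- ex, ev, eu, <- edd; ring. }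
  assert (u <> 0) by (intro; subst u; lia); assert (v <> 0) by (intro; subst v; lia).
  exists d, d', u, v; do 5 (split; [lia|]); left; repeat split; nia.
- assert (hg : Z.gcd (a - 1) (a + 1) = 1).
  { replace (a + 1) with (2 + 1 * (a - 1)) by ring.
    rewrite Z.gcd_add_mult_diag_r, Z.gcd_comm, <- Z.gcd_mod by lia.
    replace (a - 1) with (1 + (t - 1) * 2) by lia; rewrite Z_mod_plus_full; reflexivity. }
  assert (ex : (a - 1) * (a + 1) = m * (b * b)) by nia.
  destruct (coprime_mul_eq_mul_square (a - 1) (a + 1) m b ltac:(lia) ltac:(lia) hm hg ex)
    as (d & d' & u & v & hd & hd' & edd & hu & hv & eu & ev).
  assert (hbb : b * b = (u * v) * (u * v)).
  { apply (Z.mul_cancel_l _ _ m); [lia|]; rewrite <- ex, eu, ev, <- edd; ring. }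
  assert (u <> 0) by (intro; subst u; lia); assert (v <> 0) by (intro; subst v; lia).
  exists d, d', u, v; do 5 (split; [lia|]); right; repeat split; nia.
Qed.

Lemma sqrt_IZR_sqr m : 0 <= m -> (sqrt (IZR m) * sqrt (IZR m) = IZR m)%R.
Proof. intros hm; apply sqrt_sqrt, IZR_le, hm. Qed.

Lemma add_mul_sqrt_inj m p x y x' y' : prime p -> (p | m) -> ~ (p * p | m) -> 0 < m ->
  (IZR x + IZR y * sqrt (IZR m) = IZR x' + IZR y' * sqrt (IZR m))%R -> x = x' /\ y = y'.
Proof.
intros hp hpm hpp hm e; pose proof (sqrt_IZR_sqr m ltac:(lia)) as hS.
destruct (Z.eq_dec y y') as [<-|hne].
- split; [apply eq_IZR; lra | reflexivity].
- exfalso.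
  assert (e2 : (IZR (y - y') * sqrt (IZR m) = IZR (x' - x))%R) by (rewrite !minus_IZR; lra).
  assert (e3 : (IZR m * (IZR (y - y') * IZR (y - y')) = IZR (x' - x) * IZR (x' - x))%R).
  { rewrite <- e2; rewrite <- hS at 1; ring. }
  rewrite <- !mult_IZR in e3; apply eq_IZR in e3.
  apply (not_square_mul_square m (y - y') (x' - x) p hp); auto; lia.
Qed.

Lemma unit_gt1_coords m a b : 0 < m -> a * a - m * (b * b) = 1 ->
  (1 < IZR a + IZR b * sqrt (IZR m))%R -> 1 < a /\ 0 < b.
Proof.
intros hm hn hgt.
set (S := sqrt (IZR m)) in *.
assert (hS : (S * S = IZR m)%R) by (apply sqrt_IZR_sqr; lia).
assert (hS0 : (0 < S)%R) by (apply sqrt_lt_R0, IZR_lt; lia).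
set (f := (IZR a - IZR b * S)%R).
assert (hef : ((IZR a + IZR b * S) * f = 1)%R).
{ unfold f; replace 1%R with (IZR (a * a - m * (b * b))) by (rewrite hn; reflexivity).
  rewrite minus_IZR, !mult_IZR, <- hS; ring. }
assert (hf0 : (0 < f)%R) by nra.
assert (hf1 : (f < 1)%R) by nra.
assert (ha : 0 < a) by (apply lt_IZR; unfold f in *; lra).
assert (hb : 0 < b) by (apply lt_IZR; unfold f in *; nra).
split; [nia | exact hb].
Qed.

(* [a - 1 = 2 m u^2] says [a + b sqrt m = (v + u sqrt m)^2] for a unit
   [v + u sqrt m] of norm 1. *)
Definition not_square_unit (m a : Z) : Prop :=
  forall u v, 0 < u -> 0 < v -> v * v - m * (u * u) = 1 -> a - 1 <> 2 * m * (u * u).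

Section FundamentalUnit.
Variables m p : Z.
Hypotheses (p_prime : prime p) (p_dvd_m : (p | m)) (p2_ndvd_m : ~ (p * p | m))
  (m_gt1 : 1 < m) (no_norm_m1 : forall a b, a * a - m * (b * b) <> -1).

Lemma fund_unit_pell a b : fund_unit m (IZR a + IZR b * sqrt (IZR m))%R ->
  a * a - m * (b * b) = 1 /\ 1 < a /\ 0 < b /\ not_square_unit m a.
Proof.
intros [[c [d [ec hcd]]] [hgt hmin]].
pose proof (sqrt_IZR_sqr m ltac:(lia)) as hS.
assert (e2 : (IZR (2 * a) + IZR (2 * b) * sqrt (IZR m) = IZR c + IZR d * sqrt (IZR m))%R)
  by (rewrite !mult_IZR; lra).
destruct (add_mul_sqrt_inj m p _ _ _ _ p_prime p_dvd_m p2_ndvd_m ltac:(lia) e2) as [<- <-].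
assert (hn : a * a - m * (b * b) = 1).
{ destruct hcd as [h|h]; [lia | exfalso; apply (no_norm_m1 a b); lia]. }
destruct (unit_gt1_coords m a b ltac:(lia) hn hgt) as [ha hb].
repeat split; try assumption.
intros u v hu hv huv hau.
set (eta := (IZR v + IZR u * sqrt (IZR m))%R).
assert (heta : (1 < eta)%R).
{ assert (1 <= IZR u)%R by (apply IZR_le; lia); assert (1 <= IZR v)%R by (apply IZR_le; lia).
  pose proof (sqrt_lt_R0 (IZR m) ltac:(apply IZR_lt; lia)); unfold eta; nra. }
assert (hunit : unit_OK m eta).
{ exists (2 * v), (2 * u); split; [unfold eta; rewrite !mult_IZR; field | left; nia]. }
assert (hb2 : b = 2 * u * v).
{ assert (b * b = (2 * u * v) * (2 * u * v)) by (apply (Z.mul_cancel_l _ _ m); nia). nia. }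
assert (eeps : (IZR a + IZR b * sqrt (IZR m) = eta * eta)%R).
{ assert (hv2 : (IZR v * IZR v = 1 + IZR m * (IZR u * IZR u))%R)
    by (rewrite <- !mult_IZR, <- plus_IZR; f_equal; lia).
  unfold eta; rewrite hb2; replace a with (2 * m * (u * u) + 1) by lia.
  rewrite !plus_IZR, !mult_IZR.
  set (S := sqrt (IZR m)) in *; rewrite <- hS in hv2 |- *; nra. }
specialize (hmin eta hunit heta); nra.
Qed.

End FundamentalUnit.

Lemma sqrt_mul_add_mul_sqrt (k a b M A B al be : Z) :
  0 <= A -> 0 <= B -> 0 <= al -> 0 <= be -> M = A * B ->
  k * a = al * al * A + be * be * B -> k * b = 2 * al * be ->
  sqrt (IZR k * (IZR a + IZR b * sqrt (IZR M)))
  = (IZR al * sqrt (IZR A) + IZR be * sqrt (IZR B))%R.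
Proof.
intros hA hB hal hbe -> e1 e2.
pose proof (sqrt_IZR_sqr A hA) as sA; pose proof (sqrt_IZR_sqr B hB) as sB.
assert (hpos : (0 <= IZR al * sqrt (IZR A) + IZR be * sqrt (IZR B))%R).
{ assert (0 <= IZR al)%R by (apply IZR_le; lia); assert (0 <= IZR be)%R by (apply IZR_le; lia).
  pose proof (sqrt_pos (IZR A)); pose proof (sqrt_pos (IZR B)); nra. }
assert (sM : sqrt (IZR (A * B)) = (sqrt (IZR A) * sqrt (IZR B))%R)
  by (rewrite mult_IZR; apply sqrt_mult; apply IZR_le; lia).
rewrite <- (sqrt_square _ hpos), sM; f_equal.
replace (IZR k * (IZR a + IZR b * (sqrt (IZR A) * sqrt (IZR B))))%R
  with (IZR (k * a) + IZR (k * b) * (sqrt (IZR A) * sqrt (IZR B)))%R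
  by (rewrite !mult_IZR; ring).
rewrite e1, e2, !plus_IZR, !mult_IZR, <- sA at 1; rewrite <- sB at 1; ring.
Qed.

Lemma not_divide_mul p x y : prime p -> ~ (p | x) -> ~ (p | y) -> ~ (p | x * y).
Proof. intros hp hx hy h; destruct (prime_mult p hp x y h); auto. Qed.

Lemma not_divide_small p c : 0 < c < p -> ~ (p | c).
Proof. intros hc h; apply Z.divide_pos_le in h; lia. Qed.

Lemma not_divide_m1 p : prime p -> ~ (p | -1).
Proof.
intros hp h; pose proof (prime_ge_2 p hp).
apply Z.divide_opp_r, Z.divide_pos_le in h; lia.
Qed.

Lemma not_divide_prime p x : prime p -> prime x -> p <> x -> ~ (p | x).
Proof. intros hp hx hne h; apply hne, prime_div_prime; assumption. Qed.

Lemma euler_sym_one t : prime t -> t mod 2 = 1 -> euler_sym t 1 = 1.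
Proof.
intros ht ho; apply (euler_sym_sq t ht ho 1).
pose proof (prime_ge_2 t ht); apply not_divide_small; lia.
Qed.

Lemma euler_sym_form_dvdB A B c u v t : A * (v * v) - B * (u * u) = c ->
  prime t -> t mod 2 = 1 -> (t | B) -> ~ (t | c) -> euler_sym t A = euler_sym t c.
Proof.
intros e ht ho hB hc.
assert (hv : ~ (t | v)).
{ intros hv; apply hc; rewrite <- e.
  apply Z.divide_sub_r; [apply Z.divide_mul_r, Z.divide_mul_l | apply Z.divide_mul_l]; assumption. }
assert (hA : ~ (t | A)).
{ intros hA; apply hc; rewrite <- e; apply Z.divide_sub_r; apply Z.divide_mul_l; assumption. }
rewrite <- (euler_sym_cong t ht (A * (v * v)) c).
- rewrite euler_symM, euler_sym_sq by (try apply not_divide_mul; assumption); ring.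
- replace (A * (v * v) - c) with (B * (u * u)) by lia; apply Z.divide_mul_l; assumption.
Qed.

Lemma euler_sym_form_dvdA A B c u v t : A * (v * v) - B * (u * u) = c ->
  prime t -> t mod 2 = 1 -> (t | A) -> ~ (t | c) ->
  euler_sym t (-1) * euler_sym t B = euler_sym t c.
Proof.
intros e ht ho hA hc.
assert (hu : ~ (t | u)).
{ intros hu; apply hc; rewrite <- e.
  apply Z.divide_sub_r; [apply Z.divide_mul_l | apply Z.divide_mul_r, Z.divide_mul_l]; assumption. }
assert (hB : ~ (t | B)).
{ intros hB; apply hc; rewrite <- e; apply Z.divide_sub_r; apply Z.divide_mul_l; assumption. }
pose proof (not_divide_m1 t ht).
rewrite <- (euler_sym_cong t ht (-1 * B * (u * u)) c).
- rewrite euler_symM, euler_sym_sq, euler_symM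
    by (try apply not_divide_mul; try apply not_divide_mul; assumption); ring.
- replace (-1 * B * (u * u) - c) with (- (A * (v * v))) by lia.
  apply Z.divide_opp_r, Z.divide_mul_l; assumption.
Qed.

Definition residues_mod8 : list Z := map Z.of_nat (seq 0 8).

Definition form_unsolvable_mod8 (a b c : Z) : bool :=
  forallb (fun x => forallb (fun y => negb ((a * (y * y) - b * (x * x) - c) mod 8 =? 0))
                            residues_mod8) residues_mod8.

Lemma no_solution_mod8 A B c u v a b : A * (v * v) - B * (u * u) = c ->
  A mod 8 = a -> B mod 8 = b -> form_unsolvable_mod8 a b c = true -> False.
Proof.
intros e ha hb hc; unfold form_unsolvable_mod8 in hc; rewrite forallb_forall in hc.
assert (hres : forall x, In (x mod 8) residues_mod8).
{ intros x; pose proof (Z.mod_pos_bound x 8 ltac:(lia)); apply in_map_iff.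
  exists (Z.to_nat (x mod 8)); split; [lia | apply in_seq; lia]. }
specialize (hc _ (hres u)); rewrite forallb_forall in hc; specialize (hc _ (hres v)).
apply Bool.negb_true_iff, Z.eqb_neq in hc; apply hc.
rewrite <- ha, <- hb, <- e.
rewrite Zminus_mod, (Zminus_mod (A * (v * v))), Zmult_mod, (Zmult_mod B),
  (Zmult_mod v v), (Zmult_mod u u).
rewrite Zminus_mod, (Zminus_mod (A mod 8 * _)), Zmult_mod, (Zmult_mod (B mod 8)),
  (Zmult_mod (v mod 8)), (Zmult_mod (u mod 8)), !Zmod_mod, Z.sub_diag.
reflexivity.
Qed.

Lemma Zmod8_mul x y rx ry : x mod 8 = rx -> y mod 8 = ry -> (x * y) mod 8 = (rx * ry) mod 8.
Proof. intros h1 h2; rewrite Z.mul_mod, h1, h2 by lia; reflexivity. Qed.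

Lemma Zmod8_mod x n k : (n | 8) -> 0 < n -> x mod 8 = k -> x mod n = k mod n.
Proof.
intros hn hn0 h; rewrite (Zmod_div_mod n 8 x), h by (lia || assumption); reflexivity.
Qed.

Ltac residue_mod8 :=
  match goal with
  | |- (?x * ?y) mod 8 = _ => eapply Zmod8_mul; [residue_mod8 | residue_mod8]
  | |- _ => first [eassumption | reflexivity]
  end.

Ltac refute_mod8 E :=
  exfalso; eapply (no_solution_mod8 _ _ _ _ _ _ _ E);
  [residue_mod8 | residue_mod8 | vm_compute; reflexivity].

Lemma split_prime_factor p d d' k : prime p -> 0 < d -> 0 < d' -> d * d' = p * k ->
  (exists d1, d = p * d1 /\ 0 < d1 /\ d1 * d' = k) \/
  (exists d1, d' = p * d1 /\ 0 < d1 /\ d * d1 = k).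
Proof.
intros hp hd hd' e; pose proof (prime_ge_2 p hp).
assert (h : (p | d * d')) by (rewrite e; apply Z.divide_factor_l).
destruct (prime_mult p hp d d' h) as [[x hx]|[x hx]]; subst; [left | right];
  exists x; (split; [ring | split; [nia |]]);
  (apply (Z.mul_cancel_l _ _ p); [lia | rewrite <- e; ring]).
Qed.

(* Enumerates the ways of distributing the primes of [p1 * (p2 * ... * 1)]
   between [d] and [d'] in [H : d * d' = p1 * (p2 * ... * 1)]. *)
Ltac split_divisors H :=
  match type of H with
  | ?d * ?d' = ?p * ?k =>
    let d1 := fresh "d" in let e := fresh "e" in let hp := fresh "hp" in let H' := fresh "H" in
    destruct (split_prime_factor p d d' k ltac:(assumption) ltac:(assumption) ltac:(assumption) H)
      as [(d1 & e & hp & H')|(d1 & e & hp & H')]; subst; clear H; try split_divisors H'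
  | ?d * ?d' = 1 =>
    assert (d = 1) by nia; assert (d' = 1) by nia; subst; clear H
  end.

Ltac divides :=
  first [apply Z.divide_refl | apply Z.divide_mul_l; divides | apply Z.divide_mul_r; divides].

Ltac not_divides t :=
  match goal with
  | |- ~ (t | ?x * ?y) =>
      apply (not_divide_mul t x y); [assumption | not_divides t | not_divides t]
  | |- ~ (t | -1) => apply not_divide_m1; assumption
  | |- ~ (t | ?c) => apply not_divide_small; lia
  | |- ~ (t | ?x) => apply not_divide_prime; [assumption | assumption | lia]
  end.

Ltac expand_euler_sym t H :=
  repeat (rewrite (euler_symM t) in H by first [assumption | not_divides t]);
  repeat (rewrite (euler_sym_one t) in H by assumption).

Ltac rewrite_known_syms H :=
  repeat match goal with
  | h : euler_sym ?t ?x = ?v |- _ =>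
      match h with H => fail 1 | _ => rewrite h in H end
  end.

(* [E : A v^2 - B u^2 = c] with [t] dividing [A] or [B]: compare the Legendre
   symbols mod [t] of both sides, evaluated from the known ones. *)
Ltac refute_by_euler_sym t E :=
  exfalso;
  first [
    let H := fresh in
    pose proof (euler_sym_form_dvdB _ _ _ _ _ t E ltac:(assumption) ltac:(assumption)
                  ltac:(divides) ltac:(not_divides t)) as H;
    expand_euler_sym t H; rewrite_known_syms H; lia
  | let H := fresh in
    pose proof (euler_sym_form_dvdA _ _ _ _ _ t E ltac:(assumption) ltac:(assumption)
                  ltac:(divides) ltac:(not_divides t)) as H;
    expand_euler_sym t H; rewrite_known_syms H; lia ].

Ltac pick_case := first [ solve [eexists; eexists; repeat split; lia]
                        | solve [left; pick_case] | solve [right; pick_case] ].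

Definition lemma4p5_part1 (nu q r s : Z) : Prop :=
  forall a b : Z,
     fund_unit (nu * q * r * s) (IZR a + IZR b * sqrt (IZR (nu * q * r * s)))%R ->
     exactly_one
       (is_square_N (2 ^ delta nu 1 * r * (a + (-1) ^ delta nu 1)))
       (is_square_N (2 ^ delta nu 2 * q * (a - 1)))
       (is_square_N (2 ^ delta nu 2 * s * (a + (-1) ^ delta nu 1))) /\
     exists b1 b2 : Z,
       (is_square_N (2 ^ delta nu 1 * r * (a + (-1) ^ delta nu 1)) ->
          sqrt (IZR nu * (IZR a + IZR b * sqrt (IZR (nu * q * r * s))))
            = (IZR b1 * sqrt (IZR r) + IZR b2 * sqrt (IZR (nu * q * s)))%R /\
          2 ^ delta nu 2 = (-1) ^ delta nu 1 * r * b1 ^ 2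
                           + (-1) ^ delta nu 2 * nu * q * s * b2 ^ 2) /\
       (is_square_N (2 ^ delta nu 2 * q * (a - 1)) ->
          sqrt (2 * (IZR a + IZR b * sqrt (IZR (nu * q * r * s))))
            = (IZR b1 * sqrt (IZR (nu * q)) + IZR b2 * sqrt (IZR (r * s)))%R /\
          2 = - 2 ^ delta nu 2 * q * b1 ^ 2 + r * s * b2 ^ 2) /\
       (is_square_N (2 ^ delta nu 2 * s * (a + (-1) ^ delta nu 1)) ->
          sqrt (2 * (IZR a + IZR b * sqrt (IZR (nu * q * r * s))))
            = (IZR b1 * sqrt (IZR (nu * s)) + IZR b2 * sqrt (IZR (q * r)))%R /\
          2 = (-1) ^ delta nu 1 * 2 ^ delta nu 2 * s * b1 ^ 2
              + (-1) ^ delta nu 2 * q * r * b2 ^ 2).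

Definition lemma4p5_part2 (nu rho q r s : Z) : Prop :=
  forall x y : Z,
     fund_unit (rho * q * r * s) (IZR x + IZR y * sqrt (IZR (rho * q * r * s)))%R ->
     is_square_N (2 ^ delta nu 2 * q * (x - 1)) /\
     exists y1 y2 : Z,
       sqrt (IZR rho * (IZR x + IZR y * sqrt (IZR (rho * q * r * s))))
         = (IZR y1 * sqrt (IZR q) + IZR y2 * sqrt (IZR (rho * r * s)))%R /\
       rho = - q * y1 ^ 2 + rho * r * s * y2 ^ 2.

Lemma exactly_one_case (P1 P2 P3 : Prop) (Q1 Q2 Q3 : Z -> Z -> Prop) :
  (P1 /\ ~ P2 /\ ~ P3 /\ (exists b1 b2, Q1 b1 b2)) \/
  (~ P1 /\ P2 /\ ~ P3 /\ (exists b1 b2, Q2 b1 b2)) \/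
  (~ P1 /\ ~ P2 /\ P3 /\ (exists b1 b2, Q3 b1 b2)) ->
  exactly_one P1 P2 P3 /\
  exists b1 b2, (P1 -> Q1 b1 b2) /\ (P2 -> Q2 b1 b2) /\ (P3 -> Q3 b1 b2).
Proof.
unfold exactly_one.
intros [(h1 & h2 & h3 & b1 & b2 & hq) | [(h1 & h2 & h3 & b1 & b2 & hq)
         | (h1 & h2 & h3 & b1 & b2 & hq)]];
  (split; [tauto | exists b1, b2; tauto]).
Qed.

Ltac normalize_delta :=
  unfold delta in *; cbn [Z.eqb Pos.eqb] in *;
  rewrite ?Z.pow_0_r, ?Z.pow_1_r, ?Z.pow_2_r, ?Z.mul_1_l in *.

Section ThreePrimes.
Variables q r s : Z.
Hypotheses (hq : prime q) (hr : prime r) (hs : prime s)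
  (hqr : q <> r) (hqs : q <> s) (hrs : r <> s)
  (q8 : q mod 8 = 7) (r8 : r mod 8 = 3) (s8 : s mod 8 = 3).

Lemma primes_gt2 : 2 < q /\ 2 < r /\ 2 < s.
Proof.
pose proof (prime_ge_2 q hq); pose proof (prime_ge_2 r hr); pose proof (prime_ge_2 s hs).
pose proof (Z_div_mod_eq_full q 8); pose proof (Z_div_mod_eq_full r 8);
  pose proof (Z_div_mod_eq_full s 8); lia.
Qed.

Lemma primes_odd : q mod 2 = 1 /\ r mod 2 = 1 /\ s mod 2 = 1.
Proof.
repeat split; [rewrite (Zmod8_mod q 2 7) | rewrite (Zmod8_mod r 2 3) | rewrite (Zmod8_mod s 2 3)];
  first [reflexivity | exists 4; reflexivity | lia | assumption].
Qed.

Lemma primes_mod4 : q mod 4 = 3 /\ r mod 4 = 3 /\ s mod 4 = 3.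
Proof.
repeat split; [rewrite (Zmod8_mod q 4 7) | rewrite (Zmod8_mod r 4 3) | rewrite (Zmod8_mod s 4 3)];
  first [reflexivity | exists 2; reflexivity | lia | assumption].
Qed.

Lemma euler_sym_table :
  euler_sym q (-1) = -1 /\ euler_sym r (-1) = -1 /\ euler_sym s (-1) = -1 /\
  euler_sym q 2 = 1 /\ euler_sym r 2 = -1 /\ euler_sym s 2 = -1 /\
  euler_sym q s = - euler_sym s q /\ euler_sym q r = - euler_sym r q /\
  euler_sym s r = - euler_sym r s.
Proof.
destruct primes_odd as (oq & or & os); destruct primes_mod4 as (q4 & r4 & s4).
repeat split;
  first [ apply euler_sym_m1 | apply euler_sym_two_3mod8 | apply euler_sym_two_7mod8
        | apply euler_sym_reciprocity ]; first [assumption | lia].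
Qed.

Lemma qrs_mod4 : (q * r * s) mod 4 = 3.
Proof.
destruct primes_mod4 as (q4 & r4 & s4).
rewrite Z.mul_mod, (Z.mul_mod q r), q4, r4, s4 by lia; reflexivity.
Qed.

Lemma two_qrs_mod4 : (2 * q * r * s) mod 4 = 2.
Proof.
destruct primes_mod4 as (q4 & r4 & s4).
rewrite Z.mul_mod, (Z.mul_mod (2 * q) r), (Z.mul_mod 2 q), q4, r4, s4 by lia; reflexivity.
Qed.

Lemma fund_unit_qrs_pell a b :
  fund_unit (q * r * s) (IZR a + IZR b * sqrt (IZR (q * r * s)))%R ->
  a * a - q * r * s * (b * b) = 1 /\ 1 < a /\ 0 < b /\ not_square_unit (q * r * s) a.
Proof.
destruct primes_gt2 as (q2 & r2 & s2).
apply (fund_unit_pell _ q hq).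
- exists (r * s); ring.
- replace (q * r * s) with (q * (r * s)) by ring.
  apply prime_sq_not_divide_mul; [assumption | apply not_divide_mul; [assumption | | ];
    apply not_divide_prime; assumption].
- nia.
- intros x y E; assert (E' : q * r * s * (y * y) - 1 * (x * x) = 1) by lia.
  refute_mod8 E'.
Qed.

Lemma fund_unit_2qrs_pell a b :
  fund_unit (2 * q * r * s) (IZR a + IZR b * sqrt (IZR (2 * q * r * s)))%R ->
  a * a - 2 * q * r * s * (b * b) = 1 /\ 1 < a /\ 0 < b /\ not_square_unit (2 * q * r * s) a.
Proof.
destruct primes_gt2 as (q2 & r2 & s2).
apply (fund_unit_pell _ q hq).
- exists (2 * r * s); ring.
- replace (2 * q * r * s) with (q * (2 * (r * s))) by ring.
  apply prime_sq_not_divide_mul; [assumption |].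
  apply not_divide_mul; [assumption | apply not_divide_small; lia |].
  apply not_divide_mul; [assumption | |]; apply not_divide_prime; assumption.
- nia.
- intros x y E; assert (E' : 2 * q * r * s * (y * y) - 1 * (x * x) = 1) by lia.
  refute_mod8 E'.
Qed.

Ltac prepare_symbols :=
  destruct primes_gt2 as (q2 & r2 & s2); destruct primes_odd as (oq & or & os);
  destruct euler_sym_table as (Xqm & Xrm & Xsm & Xq2 & Xr2 & Xs2 & Rqs & Rqr & Rsr).

Ltac close_case u v E Hmin :=
  first [ solve [refute_mod8 E]
        | pick_case
        | solve [exfalso; apply (Hmin u v); lia]
        | solve [refute_by_euler_sym r E]
        | solve [refute_by_euler_sym s E]
        | solve [refute_by_euler_sym q E] ].

Ltac pell_qrs_cases a b u v E Hmin :=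
  intros Xsq Xrq Xrs ha hb e Hmin; prepare_symbols;
  let d := fresh "d" in let d' := fresh "d'" in let edd := fresh "edd" in
  destruct (pell_factor a b (q * r * s) ltac:(nia) ltac:(rewrite qrs_mod4; discriminate)
              ha hb e)
    as (d & d' & u & v & ? & ? & edd & ? & ? & [(? & ? & ?)|(? & ? & ? & ?)]);
  [ assert (E : d' * (v * v) - d * (u * u) = 1) by lia
  | assert (E : d' * (v * v) - d * (u * u) = 2) by lia ];
  replace (q * r * s) with (q * (r * (s * 1))) in edd by ring; split_divisors edd.

Ltac pell_2qrs_cases a b u v E Hmin :=
  intros Xsq Xrq Xrs ha hb e Hmin; prepare_symbols; pose proof prime_2;
  let d := fresh "d" in let d' := fresh "d'" in let edd := fresh "edd" in
  destruct (pell_factor a b (2 * q * r * s) ltac:(nia) ltac:(rewrite two_qrs_mod4; discriminate)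
              ha hb e)
    as (d & d' & u & v & ? & ? & edd & ? & ? & [(? & ? & ?)|(? & ? & ? & ?)]);
  [ assert (E : d' * (v * v) - d * (u * u) = 1) by lia;
    replace (2 * q * r * s) with (2 * (q * (r * (s * 1)))) in edd by ring; split_divisors edd
  | exfalso; replace a with (2 * (a / 2)) in e by (pose proof (Z_div_mod_eq_full a 2); lia);
    lia ].

Lemma pell_qrs_sym_pos a b : euler_sym s q = 1 -> euler_sym r q = 1 -> euler_sym r s = 1 ->
  1 < a -> 0 < b -> a * a - q * r * s * (b * b) = 1 -> not_square_unit (q * r * s) a ->
  (exists u v, 0 < u /\ 0 < v /\
     a - 1 = 2 * r * (u * u) /\ a + 1 = 2 * (q * s) * (v * v) /\ b = 2 * u * v) \/
  (exists u v, 0 < u /\ 0 < v /\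
     a - 1 = q * (u * u) /\ a + 1 = r * s * (v * v) /\ b = u * v) \/
  (exists u v, 0 < u /\ 0 < v /\
     a - 1 = s * (u * u) /\ a + 1 = q * r * (v * v) /\ b = u * v).
Proof.
pell_qrs_cases a b u v E Hmin.
all: close_case u v E Hmin.
Qed.

Lemma pell_qrs_sym_neg a b : euler_sym s q = -1 -> euler_sym r q = -1 -> euler_sym r s = 1 ->
  1 < a -> 0 < b -> a * a - q * r * s * (b * b) = 1 -> not_square_unit (q * r * s) a ->
  exists u v, 0 < u /\ 0 < v /\
    a - 1 = 2 * q * (u * u) /\ a + 1 = 2 * (r * s) * (v * v) /\ b = 2 * u * v.
Proof.
pell_qrs_cases a b u v E Hmin.
all: close_case u v E Hmin.
Qed.

Lemma pell_2qrs_sym_neg a b : euler_sym s q = -1 -> euler_sym r q = -1 -> euler_sym r s = 1 ->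
  1 < a -> 0 < b -> a * a - 2 * q * r * s * (b * b) = 1 -> not_square_unit (2 * q * r * s) a ->
  (exists u v, 0 < u /\ 0 < v /\
     a - 1 = 2 * q * (u * u) /\ a + 1 = 4 * (r * s) * (v * v) /\ b = 2 * u * v) \/
  (exists u v, 0 < u /\ 0 < v /\
     a - 1 = 2 * (q * s) * (u * u) /\ a + 1 = 4 * r * (v * v) /\ b = 2 * u * v) \/
  (exists u v, 0 < u /\ 0 < v /\
     a - 1 = 4 * (q * r) * (u * u) /\ a + 1 = 2 * s * (v * v) /\ b = 2 * u * v).
Proof.
pell_2qrs_cases a b u v E Hmin.
all: close_case u v E Hmin.
Qed.

Lemma pell_2qrs_sym_pos a b : euler_sym s q = 1 -> euler_sym r q = 1 -> euler_sym r s = 1 ->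
  1 < a -> 0 < b -> a * a - 2 * q * r * s * (b * b) = 1 -> not_square_unit (2 * q * r * s) a ->
  exists u v, 0 < u /\ 0 < v /\
    a - 1 = 4 * q * (u * u) /\ a + 1 = 2 * (r * s) * (v * v) /\ b = 2 * u * v.
Proof.
pell_2qrs_cases a b u v E Hmin.
all: close_case u v E Hmin.
Qed.

Ltac not_square p K t :=
  apply (not_square_prime_mul p K t); [assumption | not_divides p | lia | nia].

Lemma lemma4p5_part1_nu1 : euler_sym s q = 1 -> euler_sym r q = 1 -> euler_sym r s = 1 ->
  lemma4p5_part1 1 q r s.
Proof.
intros Xsq Xrq Xrs a b Hfu; normalize_delta.
destruct primes_gt2 as (q2 & r2 & s2).
destruct (fund_unit_qrs_pell a b Hfu) as (hn & ha & hb & Hmin).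
apply exactly_one_case.
destruct (pell_qrs_sym_pos a b Xsq Xrq Xrs ha hb hn Hmin) as
  [(u & v & hu & hv & e1 & e2 & e3) | [(u & v & hu & hv & e1 & e2 & e3)
  | (u & v & hu & hv & e1 & e2 & e3)]]; [left | right; left | right; right];
  (split; [| split; [| split]]).
- exists (2 * r * u); nia.
- not_square q (2 * r) u.
- not_square s (2 * r) u.
- exists u, v; split; [apply (sqrt_mul_add_mul_sqrt 1 a b (q * r * s) r (q * s) u v) |]; lia.
- not_square q (2 * r) u.
- exists (q * u); nia.
- not_square q s u.
- exists u, v; split; [apply (sqrt_mul_add_mul_sqrt 2 a b (q * r * s) q (r * s) u v) |]; lia.
- not_square s (2 * r) u.
- not_square s q u.
- exists (s * u); nia.
- exists u, v; split; [apply (sqrt_mul_add_mul_sqrt 2 a b (q * r * s) s (q * r) u v) |]; lia.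
Qed.

Lemma lemma4p5_part1_nu2 : euler_sym s q = -1 -> euler_sym r q = -1 -> euler_sym r s = 1 ->
  lemma4p5_part1 2 q r s.
Proof.
intros Xsq Xrq Xrs a b Hfu; normalize_delta.
destruct primes_gt2 as (q2 & r2 & s2).
destruct (fund_unit_2qrs_pell a b Hfu) as (hn & ha & hb & Hmin).
apply exactly_one_case.
destruct (pell_2qrs_sym_neg a b Xsq Xrq Xrs ha hb hn Hmin) as
  [(u & v & hu & hv & e1 & e2 & e3) | [(u & v & hu & hv & e1 & e2 & e3)
  | (u & v & hu & hv & e1 & e2 & e3)]]; [right; left | left | right; right];
  (split; [| split; [| split]]).
- not_square s 1 (2 * r * v).
- exists (2 * q * u); nia.
- not_square r 2 (2 * s * v).
- exists u, (2 * v); split; [|lia].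
  apply (sqrt_mul_add_mul_sqrt 2 a b (2 * q * r * s) (2 * q) (r * s) u (2 * v)); lia.
- exists (2 * r * v); nia.
- not_square s 1 (2 * q * u).
- not_square r (2 * s) (2 * v).
- exists (2 * v), u; split; [|lia].
  apply (sqrt_mul_add_mul_sqrt 2 a b (2 * q * r * s) r (2 * q * s) (2 * v) u); lia.
- not_square r (2 * s) v.
- not_square r 2 (2 * q * u).
- exists (2 * s * v); nia.
- exists v, (2 * u); split; [|lia].
  apply (sqrt_mul_add_mul_sqrt 2 a b (2 * q * r * s) (2 * s) (q * r) v (2 * u)); lia.
Qed.

Lemma lemma4p5_part2_nu1 : euler_sym s q = 1 -> euler_sym r q = 1 -> euler_sym r s = 1 ->
  lemma4p5_part2 1 2 q r s.
Proof.
intros Xsq Xrq Xrs x y Hfu; normalize_delta.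
destruct primes_gt2 as (q2 & r2 & s2).
destruct (fund_unit_2qrs_pell x y Hfu) as (hn & hx & hy & Hmin).
destruct (pell_2qrs_sym_pos x y Xsq Xrq Xrs hx hy hn Hmin) as (u & v & hu & hv & e1 & e2 & e3).
split; [exists (2 * q * u); nia |].
exists (2 * u), v; split; [|lia].
apply (sqrt_mul_add_mul_sqrt 2 x y (2 * q * r * s) q (2 * r * s) (2 * u) v); lia.
Qed.

Lemma lemma4p5_part2_nu2 : euler_sym s q = -1 -> euler_sym r q = -1 -> euler_sym r s = 1 ->
  lemma4p5_part2 2 1 q r s.
Proof.
intros Xsq Xrq Xrs x y Hfu; normalize_delta.
destruct primes_gt2 as (q2 & r2 & s2).
destruct (fund_unit_qrs_pell x y Hfu) as (hn & hx & hy & Hmin).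
destruct (pell_qrs_sym_neg x y Xsq Xrq Xrs hx hy hn Hmin) as (u & v & hu & hv & e1 & e2 & e3).
split; [exists (2 * q * u); nia |].
exists u, v; split; [apply (sqrt_mul_add_mul_sqrt 1 x y (q * r * s) q (r * s) u v) |]; lia.
Qed.

Lemma euler_sym_legendre_table :
  euler_sym s q = legendre q s /\ euler_sym r q = legendre q r /\ euler_sym r s = legendre s r.
Proof.
destruct primes_gt2 as (q2 & r2 & s2); destruct primes_odd as (oq & or & os).
repeat split; symmetry; apply legendre_euler_sym; try assumption;
  apply not_divide_prime; first [assumption | lia].
Qed.

End ThreePrimes.

Theorem lemma4p5 (nu rho q r s : Z) :
  (nu = 1 \/ nu = 2) -> (rho = 1 \/ rho = 2) -> rho <> nu ->
  prime q -> prime r -> prime s -> q <> r -> q <> s -> r <> s ->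
  q mod 8 = 7 -> r mod 8 = 3 -> s mod 8 = 3 ->
  legendre q s = (-1) ^ delta nu 2 -> legendre q r = (-1) ^ delta nu 2 ->
  legendre s r = 1 ->
  (* Part 1 *)
  (forall a b : Z,
     fund_unit (nu * q * r * s) (IZR a + IZR b * sqrt (IZR (nu * q * r * s)))%R ->
     exactly_one
       (is_square_N (2 ^ delta nu 1 * r * (a + (-1) ^ delta nu 1)))
       (is_square_N (2 ^ delta nu 2 * q * (a - 1)))
       (is_square_N (2 ^ delta nu 2 * s * (a + (-1) ^ delta nu 1))) /\
     exists b1 b2 : Z,
       (is_square_N (2 ^ delta nu 1 * r * (a + (-1) ^ delta nu 1)) ->
          sqrt (IZR nu * (IZR a + IZR b * sqrt (IZR (nu * q * r * s))))
            = (IZR b1 * sqrt (IZR r) + IZR b2 * sqrt (IZR (nu * q * s)))%R /\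
          2 ^ delta nu 2 = (-1) ^ delta nu 1 * r * b1 ^ 2
                           + (-1) ^ delta nu 2 * nu * q * s * b2 ^ 2) /\
       (is_square_N (2 ^ delta nu 2 * q * (a - 1)) ->
          sqrt (2 * (IZR a + IZR b * sqrt (IZR (nu * q * r * s))))
            = (IZR b1 * sqrt (IZR (nu * q)) + IZR b2 * sqrt (IZR (r * s)))%R /\
          2 = - 2 ^ delta nu 2 * q * b1 ^ 2 + r * s * b2 ^ 2) /\
       (is_square_N (2 ^ delta nu 2 * s * (a + (-1) ^ delta nu 1)) ->
          sqrt (2 * (IZR a + IZR b * sqrt (IZR (nu * q * r * s))))
            = (IZR b1 * sqrt (IZR (nu * s)) + IZR b2 * sqrt (IZR (q * r)))%R /\
          2 = (-1) ^ delta nu 1 * 2 ^ delta nu 2 * s * b1 ^ 2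
              + (-1) ^ delta nu 2 * q * r * b2 ^ 2)) /\
  (* Part 2 *)
  (forall x y : Z,
     fund_unit (rho * q * r * s) (IZR x + IZR y * sqrt (IZR (rho * q * r * s)))%R ->
     is_square_N (2 ^ delta nu 2 * q * (x - 1)) /\
     exists y1 y2 : Z,
       sqrt (IZR rho * (IZR x + IZR y * sqrt (IZR (rho * q * r * s))))
         = (IZR y1 * sqrt (IZR q) + IZR y2 * sqrt (IZR (rho * r * s)))%R /\
       rho = - q * y1 ^ 2 + rho * r * s * y2 ^ 2).
Proof.
intros Hnu Hrho Hne hq hr hs hqr hqs hrs q8 r8 s8 Lqs Lqr Lsr.
destruct (euler_sym_legendre_table q r s hq hr hs hqr hqs hrs q8 r8 s8) as (Eqs & Eqr & Ers).
rewrite <- Eqs in Lqs; rewrite <- Eqr in Lqr; rewrite <- Ers in Lsr.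
destruct Hnu as [-> | ->]; [replace rho with 2 by lia | replace rho with 1 by lia];
  split; first [ apply lemma4p5_part1_nu1 | apply lemma4p5_part1_nu2
                | apply lemma4p5_part2_nu1 | apply lemma4p5_part2_nu2 ]; assumption.
Qed.
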